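(* Let $r=\max\{\eta_a,\eta_b\}$, $\alpha=\max\{\sigma_{\max}(U):U\in B(V_*,r)\}$, $L=6\alpha^2\max\{|\lambda_1|,|\lambda_{\max}|\}$. Let $\eta_1\in(0,\min\{1,\eta_a,\eta_b\})$, $\eta_2\in(0,\eta_1)$ and $0<\delta_b\leqslant\min\left\{\frac{\eta_1-\eta_2}{L\max\{\eta_a,\eta_b\}+|\lambda_1|\alpha(\alpha+1)\eta_2},\delta^*\right\}$. Then $$g\big(B([V_*],\eta_2)\times[0,\delta_b]\big)\subset B([V_*],\eta_1).$$
   Context: Let $\mathcal{V}^{N_g}$ be a real Hilbert space of finite dimension $N_g$ with inner product $(\cdot,\cdot)$, and let $H:\mathcal{V}^{N_g}\to\mathcal{V}^{N_g}$ be a self-adjoint linear operator with eigenvalues $\lambda_1\leqslant\cdots\leqslant\lambda_{N_g}$, $\lambda_{\max}=\lambda_{N_g}$, $\lambda_1<0$. Fix $N<N_g$ with $\lambda_N<\lambda_{N+1}$. Elements of $(\mathcal{V}^{N_g})^N$ are written $U=(u_1,\dots,u_N)$; $U^\top V=((u_i,v_j))_{i,j=1}^N$; for a real $N\times N$ matrix $A=(a_{kj})$, $UA$ has $j$-th component $\sum_k a_{kj}u_k$; $HU=(Hu_1,\dots,Hu_N)$; $\|U\|=\operatorname{tr}(U^\top U)^{1/2}$; $\sigma_{\max}(U)=\sqrt{\lambda_{\max}(U^\top U)}$. Set $\nabla E(U)=HU$. For $U$, $\mathcal{A}_U=\nabla E(U)U^\top-U\nabla E(U)^\top$ is the linear operator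 on $\mathcal{V}^{N_g}$ given by $\mathcal{A}_Uw=\sum_{i=1}^N\big(Hu_i\,(u_i,w)-u_i\,(Hu_i,w)\big)$, applied componentwise. Let $V_*$ satisfy $V_*^\top V_*=I_N$, $HV_*=V_*\operatorname{diag}(\lambda_1,\dots,\lambda_N)$. $\mathcal{O}^N$ denotes the $N\times N$ orthogonal matrices, $\operatorname{dist}([U],[V_*])=\inf_{Q\in\mathcal{O}^N}\|UQ-V_*\|$, $B(U,\eta)=\{W:\|W-U\|\leqslant\eta\}$, $B([V_*],\eta)=\{W:\operatorname{dist}([W],[V_*])\leqslant\eta\}$. Fix constants $\eta_a,\eta_b,\delta^*>0$ such that (as asserted in the paper) there is a unique function $\hat g:B(V_*,\eta_a)\times[0,\delta^*]\to B(V_*,\eta_b)$ with $\hat g(U,s)-U=-s\,\mathcal{A}_{\frac{\hat g(U,s)+U}{2}}\frac{\hat g(U,s)+U}{2}$, and a unique function $g:B([V_*],\eta_a)\times[0,\delta^*]\to B([V_*],\eta_b)$ with $g(U,s)=\hat g(U,s)-s\nabla E(\hat g(U,s))(I_N-\hat g(U,s)^\top\hat g(U,s))$, defined on $B(V_*,\eta_a)$ by this formula and extended to $B([V_*],\eta_a)$ by orthogonal invariance $g(UQ,s)=g(U,s)Q$ for $Q\in\mathcal{O}^N$. *)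

(* The N_g-dimensional real Hilbert space is
   modelled as column vectors 'cV[R]_ng with the standard inner product;
   an N-tuple U = (u_1,...,u_N) is an ng x n matrix whose columns are the u_i. *)
From HB Require Import structures.
From mathcomp Require Import all_boot all_order all_algebra.
From mathcomp Require Import classical_sets reals.
Set Implicit Arguments. Unset Strict Implicit. Unset Printing Implicit Defensive.
Import Order.TTheory GRing.Theory Num.Theory.
Local Open Scope ring_scope.
Local Open Scope classical_set_scope.

Definition fnorm {R : realType} {m n : nat} (U : 'M[R]_(m, n)) : R :=
  Num.sqrt (\tr (U^T *m U)).

Definition lambda_max {R : realType} {n : nat} (A : 'M[R]_n) : R :=
  sup [set a : R | eigenvalue A a].

Definition sigma_max {R : realType} {m n : nat} (U : 'M[R]_(m, n)) : R :=
  Num.sqrt (lambda_max (U^T *m U)).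

Definition orthogonal_mx {R : realType} {n : nat} (Q : 'M[R]_n) : Prop :=
  Q^T *m Q = 1%:M.

Definition dist_orb {R : realType} {m n : nat} (U V : 'M[R]_(m, n)) : R :=
  inf [set fnorm (U *m Q - V) | Q in [set Q : 'M[R]_n | orthogonal_mx Q]].

Definition Aop {R : realType} {m n : nat} (H : 'M[R]_m) (U W : 'M[R]_(m, n))
  : 'M[R]_(m, n) :=
  (H *m U) *m (U^T *m W) - U *m ((H *m U)^T *m W).

From HB Require Import structures.
From mathcomp Require Import all_boot all_order all_algebra.
From mathcomp Require Import classical_sets boolp reals ring lra.
Import Order.TTheory GRing.Theory Num.Theory.
Local Open Scope ring_scope.
Set Implicit Arguments. Unset Strict Implicit. Unset Printing Implicit Defensive.

(* Rotating U by an orthogonal Q that nearly realises dist([U],[Vs]) and using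
   g(UQ,s) = g(U,s) Q, it suffices to prove |g(U,s) - Vs| <= |U - Vs| + s L r for U
   close to Vs.  The implicit midpoint step G = ghat(U,s) conserves the Gram matrix,
   so g(U,s) - Vs = (U - Vs) + (G - U) - s H G (I - U^T U).  Writing every matrix as
   Vs + F with Vs^T Vs = I and H Vs = Vs Lambda, both A_W W and I - U^T U are O(|F|)
   with constants governed by max |lambda_i|; this bounds the last two terms by
   s 6 (1 + r)^2 max |lambda_i| r <= s L r, as alpha >= 1 + r.  Finally the choice of
   delta_b makes s L r <= eta1 - eta2. *)

Lemma norm_le_max_ends (R : realDomainType) (lam : nat -> R) (k i : nat) :
  (forall i j : nat, (i <= j)%N -> (j < k)%N -> lam i <= lam j) -> (i < k)%N ->
  `|lam i| <= Num.max `|lam 0%N| `|lam k.-1|.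
Proof.
move=> mono ik; have k_gt0 : (0 < k)%N by apply: leq_ltn_trans ik.
have lam0i : lam 0%N <= lam i by apply: mono.
have lamik : lam i <= lam k.-1 by apply: mono; rewrite ?prednK // -ltnS prednK.
rewrite le_max; have [lam_i_ge0 | lam_i_lt0] := lerP 0 (lam i).
  by rewrite ger0_norm // (le_trans lamik (ler_norm _)) orbT.
by rewrite (ltr0_norm lam_i_lt0) (ltr0_norm (le_lt_trans lam0i lam_i_lt0)) lerN2 lam0i.
Qed.

Lemma step_poly_le (R : realFieldType) (f e g r a : R) :
  0 <= f <= r -> 0 <= e <= r -> 0 <= g <= r -> 1 + r <= a ->
  f * (4 + 6 * f + 2 * f ^+ 2) + (2 * e + e ^+ 2) * (1 + g) <= 6 * a ^+ 2 * r.
Proof.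
move=> /andP[f_ge0 fr] /andP[e_ge0 er] /andP[g_ge0 gr] ra.
have r_ge0 : 0 <= r := le_trans f_ge0 fr.
have fr2 : f ^+ 2 <= r ^+ 2 by rewrite lerXn2r.
have er2 : e ^+ 2 <= r ^+ 2 by rewrite lerXn2r.
have ra2 : (1 + r) ^+ 2 <= a ^+ 2 by nra.
nra.
Qed.

Lemma mulr_le_of_le_divr (R : realFieldType) (s x y D : R) :
  0 <= s -> 0 < y -> y <= D -> s <= x / D -> s * y <= x.
Proof.
move=> s_ge0 y_gt0 yD; rewrite ler_pdivlMr ?(lt_le_trans y_gt0 yD) // => sD.
exact: le_trans (ler_wpM2l s_ge0 yD) sD.
Qed.

Lemma trmxZ (R : pzRingType) m n (a : R) (A : 'M[R]_(m, n)) : (a *: A)^T = a *: A^T.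
Proof. by apply/matrixP => i j; rewrite !mxE. Qed.

Section FrobeniusNorm.
Variable R : realType.
Implicit Types (m n p : nat).

Lemma cauchy_schwarz_sum (I : finType) (a b : I -> R) :
  (\sum_i a i * b i) ^+ 2 <= (\sum_i a i ^+ 2) * (\sum_i b i ^+ 2).
Proof.
set A := \sum_i a i ^+ 2; set B := \sum_i b i ^+ 2; set C := \sum_i a i * b i.
have A_ge0 : 0 <= A by apply: sumr_ge0 => i _; exact: sqr_ge0.
have [A0 | A_neq0] := eqVneq A 0.
  have a0 i : a i = 0.
    move/eqP: A0; rewrite psumr_eq0 => [/allP/(_ i (mem_index_enum _))|j _].
      by rewrite sqrf_eq0 => /eqP.
    exact: sqr_ge0.
  by rewrite /C big1 ?expr0n ?A0 ?mul0r // => i _; rewrite a0 mul0r.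
(* Expanding the square gives 0 <= \sum_i (A b_i - C a_i)^2 = A (A B - C^2). *)
have : 0 <= A * (A * B - C ^+ 2).
  have -> : A * (A * B - C ^+ 2) = \sum_i (A * b i - C * a i) ^+ 2.
    have sqE i : (A * b i - C * a i) ^+ 2
        = A ^+ 2 * b i ^+ 2 - (A * C * (a i * b i)) *+ 2 + C ^+ 2 * a i ^+ 2.
      by ring.
    under eq_bigr do rewrite sqE.
    by rewrite !big_split /= sumrN sumrMnl -!mulr_sumr -/A -/B -/C; ring.
  by apply: sumr_ge0 => i _; exact: sqr_ge0.
by rewrite pmulr_rge0 ?lt_def ?A_neq0 // subr_ge0.
Qed.

Lemma fnorm_sqr m n (X : 'M[R]_(m, n)) : fnorm X ^+ 2 = \tr (X^T *m X).
Proof.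
rewrite /fnorm sqr_sqrtr // /mxtrace; apply: sumr_ge0 => j _.
by rewrite mxE; apply: sumr_ge0 => i _; rewrite mxE -expr2 sqr_ge0.
Qed.

Lemma fnorm_sqrE m n (X : 'M[R]_(m, n)) :
  fnorm X ^+ 2 = \sum_i \sum_j X i j ^+ 2.
Proof.
rewrite fnorm_sqr /mxtrace; under eq_bigr do rewrite mxE.
rewrite exchange_big; apply: eq_bigr => i _; apply: eq_bigr => j _.
by rewrite mxE expr2.
Qed.

Lemma fnorm0 m n : fnorm (0 : 'M[R]_(m, n)) = 0.
Proof. by rewrite /fnorm trmx0 mul0mx mxtrace0 sqrtr0. Qed.

Lemma fnorm_ge0 m n (X : 'M[R]_(m, n)) : 0 <= fnorm X.
Proof. exact: sqrtr_ge0. Qed.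

Lemma fnorm_eq0 m n (X : 'M[R]_(m, n)) : (fnorm X == 0) = (X == 0).
Proof.
rewrite -sqrf_eq0 fnorm_sqrE pair_bigA psumr_eq0 /= => [|ij _]; last exact: sqr_ge0.
apply/allP/eqP => [X0 | -> ij _]; last by rewrite mxE expr0n.
apply/matrixP => i j; apply/eqP; rewrite mxE -sqrf_eq0.
exact: X0 (i, j) (mem_index_enum _).
Qed.

Lemma sum_mul_le_fnorm m n (X Y : 'M[R]_(m, n)) :
  \sum_i \sum_j X i j * Y i j <= fnorm X * fnorm Y.
Proof.
apply: le_trans (ler_norm _) _.
rewrite -sqrtr_sqr -[_ * _]ger0_norm ?mulr_ge0 ?fnorm_ge0 // -sqrtr_sqr.
rewrite ler_wsqrtr // exprMn !fnorm_sqrE !pair_bigA.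
exact: cauchy_schwarz_sum (fun ij => X ij.1 ij.2) (fun ij => Y ij.1 ij.2).
Qed.

Lemma fnormD m n (X Y : 'M[R]_(m, n)) : fnorm (X + Y) <= fnorm X + fnorm Y.
Proof.
rewrite -ler_sqr ?nnegrE ?addr_ge0 ?fnorm_ge0 // sqrrD !fnorm_sqrE.
have -> : \sum_i \sum_j (X + Y) i j ^+ 2 = \sum_i \sum_j X i j ^+ 2
    + (\sum_i \sum_j X i j * Y i j) *+ 2 + \sum_i \sum_j Y i j ^+ 2.
  rewrite -!sumrMnl -!big_split; apply: eq_bigr => i _.
  rewrite -!sumrMnl -!big_split; apply: eq_bigr => j _.
  by rewrite mxE sqrrD.
by rewrite -!fnorm_sqrE lerD2r lerD2l lerMn2r sum_mul_le_fnorm orbT.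
Qed.

Lemma fnormZ m n (c : R) (X : 'M[R]_(m, n)) : fnorm (c *: X) = `|c| * fnorm X.
Proof.
rewrite /fnorm trmxZ -scalemxAl -scalemxAr !mxtraceZ mulrA -expr2.
by rewrite sqrtrM ?sqr_ge0 // sqrtr_sqr.
Qed.

Lemma fnormN m n (X : 'M[R]_(m, n)) : fnorm (- X) = fnorm X.
Proof. by rewrite -scaleN1r fnormZ normrN1 mul1r. Qed.

Lemma fnormB m n (X Y : 'M[R]_(m, n)) : fnorm (X - Y) <= fnorm X + fnorm Y.
Proof. by rewrite -(fnormN Y) fnormD. Qed.

Lemma fnorm_trmx m n (X : 'M[R]_(m, n)) : fnorm X^T = fnorm X.
Proof. by rewrite /fnorm trmxK mxtrace_mulC. Qed.

Lemma fnormM m n p (X : 'M[R]_(m, n)) (Y : 'M[R]_(n, p)) :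
  fnorm (X *m Y) <= fnorm X * fnorm Y.
Proof.
rewrite -ler_sqr ?nnegrE ?mulr_ge0 ?fnorm_ge0 // exprMn !fnorm_sqrE.
rewrite [in X in _ * X]exchange_big.
rewrite mulr_suml; apply: ler_sum => i _; rewrite mulr_sumr; apply: ler_sum => k _.
by rewrite mxE cauchy_schwarz_sum.
Qed.

Lemma fnorm_le_entrywise m n (X : 'M[R]_(m, n)) (Y : 'M[R]_(m, n)) c :
  0 <= c -> (forall i j, `|Y i j| <= c * `|X i j|) -> fnorm Y <= c * fnorm X.
Proof.
move=> c_ge0 YX; rewrite -ler_sqr ?nnegrE ?mulr_ge0 ?fnorm_ge0 // exprMn !fnorm_sqrE mulr_sumr.
apply: ler_sum => i _; rewrite mulr_sumr; apply: ler_sum => j _.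
rewrite -[Y i j ^+ 2]real_normK ?num_real // -[X i j ^+ 2]real_normK ?num_real //.
by rewrite -exprMn ler_sqr ?nnegrE ?mulr_ge0.
Qed.

Section Isometry.
Variables (m n : nat) (V : 'M[R]_(m, n)).
Hypothesis orthoV : V^T *m V = 1%:M.

Lemma fnorm_isometryl p (X : 'M[R]_(n, p)) : fnorm (V *m X) = fnorm X.
Proof. by rewrite /fnorm trmx_mul mulmxA -(mulmxA X^T) orthoV mulmx1. Qed.

(* Pythagoras for the orthogonal projections V V^T and 1 - V V^T. *)
Lemma fnorm_trmx_isometryl_le p (X : 'M[R]_(m, p)) : fnorm (V^T *m X) <= fnorm X.
Proof.
set P := 1%:M - V *m V^T.
have PtP : P^T *m P = P.
  rewrite [P^T]linearB /= trmx1 trmx_mul trmxK -/P mulmxBl mul1mx /P mulmxBr mulmx1.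
  by rewrite mulmxA -(mulmxA V) orthoV mulmx1 subrr subr0.
have XtX : X^T *m X = (V^T *m X)^T *m (V^T *m X) + (P *m X)^T *m (P *m X).
  rewrite !trmx_mul trmxK -!mulmxA (mulmxA P^T) PtP -mulmxDr (mulmxA V) -mulmxDl.
  by rewrite /P addrC subrK mul1mx.
rewrite -ler_sqr ?nnegrE ?fnorm_ge0 // !fnorm_sqr XtX mxtraceD lerDl.
by rewrite -fnorm_sqr sqr_ge0.
Qed.

Lemma fnorm_isometryr_le p (X : 'M[R]_(p, m)) : fnorm (X *m V) <= fnorm X.
Proof. by rewrite -fnorm_trmx trmx_mul -(fnorm_trmx X) fnorm_trmx_isometryl_le. Qed.

End Isometry.

Lemma fnorm_diag_mxl_le m n (d : 'rV[R]_m) (X : 'M[R]_(m, n)) (h : R) :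
  0 <= h -> (forall i, `|d 0 i| <= h) -> fnorm (diag_mx d *m X) <= h * fnorm X.
Proof.
move=> h_ge0 dh; apply: fnorm_le_entrywise => // i j.
by rewrite mul_diag_mx mxE normrM ler_wpM2r.
Qed.

Lemma fnorm_diag_mxr_le m n (d : 'rV[R]_n) (X : 'M[R]_(m, n)) (h : R) :
  0 <= h -> (forall i, `|d 0 i| <= h) -> fnorm (X *m diag_mx d) <= h * fnorm X.
Proof.
move=> h_ge0 dh; apply: fnorm_le_entrywise => // i j.
by rewrite mul_mx_diag mxE normrM mulrC ler_wpM2r.
Qed.

Lemma fnorm_spectral_le m n (H P : 'M[R]_m) (d : 'rV[R]_m) (X : 'M[R]_(m, n)) (h : R) :
  P^T *m P = 1%:M -> H *m P = P *m diag_mx d ->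
  0 <= h -> (forall i, `|d 0 i| <= h) -> fnorm (H *m X) <= h * fnorm X.
Proof.
move=> orthoP HP h_ge0 dh.
have -> : H *m X = P *m (diag_mx d *m (P^T *m X)).
  by rewrite !mulmxA -HP -(mulmxA H) (mulmx1C orthoP) mulmx1.
rewrite fnorm_isometryl //; apply: le_trans (fnorm_diag_mxl_le _ h_ge0 dh) _.
by rewrite ler_wpM2l // fnorm_trmx_isometryl_le.
Qed.

Lemma fnorm_sorted_spectral_le m n (H P : 'M[R]_m) (lam : nat -> R)
    (X : 'M[R]_(m, n)) :
  (forall i j : nat, (i <= j)%N -> (j < m)%N -> lam i <= lam j) ->
  P^T *m P = 1%:M -> H *m P = P *m diag_mx (\row_(i < m) lam i) ->
  fnorm (H *m X) <= Num.max `|lam 0%N| `|lam m.-1| * fnorm X.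
Proof.
move=> mono orthoP HP; apply: fnorm_spectral_le orthoP HP _ _ => [|i].
  by rewrite le_max normr_ge0.
by rewrite mxE norm_le_max_ends.
Qed.

End FrobeniusNorm.

Section Perturbation.
Variables (R : realType) (m n : nat) (H : 'M[R]_m) (V : 'M[R]_(m, n)).
Variables (d : 'rV[R]_n) (h : R).
Hypotheses (orthoV : V^T *m V = 1%:M) (HV : H *m V = V *m diag_mx d) (symH : H^T = H).
Hypotheses (h_ge0 : 0 <= h) (d_le : forall i, `|d 0 i| <= h).
Hypothesis normH_le : forall p (X : 'M[R]_(m, p)), fnorm (H *m X) <= h * fnorm X.

Local Notation Lam := (diag_mx d).

Lemma trmxV_mulH : V^T *m H = Lam *m V^T.
Proof. by rewrite -{1}symH -trmx_mul HV trmx_mul tr_diag_mx. Qed.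

Lemma gram_addE (F : 'M[R]_(m, n)) :
  (V + F)^T *m (V + F) = 1%:M + (V^T *m F + F^T *m V + F^T *m F).
Proof. by rewrite [(V + F)^T]linearD /= mulmxDl !mulmxDr orthoV -!addrA. Qed.

Lemma rayleigh_addE (F : 'M[R]_(m, n)) :
  (V + F)^T *m H *m (V + F) = Lam + (Lam *m (V^T *m F) + F^T *m V *m Lam + F^T *m H *m F).
Proof.
rewrite [(V + F)^T]linearD /= !mulmxDl !mulmxDr trmxV_mulH -!mulmxA orthoV mulmx1 HV.
by rewrite !mulmxA -!addrA.
Qed.

Lemma gram_dev_le (F : 'M[R]_(m, n)) :
  fnorm ((V + F)^T *m (V + F) - 1%:M) <= 2 * fnorm F + fnorm F ^+ 2.
Proof.
rewrite gram_addE addrC addKr; apply: le_trans (fnormD _ _) _.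
rewrite mulr2n mulrDl mul1r expr2 -{3}(fnorm_trmx F).
apply: lerD; last exact: fnormM.
apply: le_trans (fnormD _ _) _; apply: lerD; first exact: fnorm_trmx_isometryl_le.
by rewrite -(fnorm_trmx F) fnorm_isometryr_le.
Qed.

Lemma rayleigh_dev_le (F : 'M[R]_(m, n)) :
  fnorm ((V + F)^T *m H *m (V + F) - Lam) <= 2 * h * fnorm F + h * fnorm F ^+ 2.
Proof.
rewrite rayleigh_addE addrC addKr.
have LVF : fnorm (Lam *m (V^T *m F)) <= h * fnorm F.
  apply: le_trans (fnorm_diag_mxl_le _ h_ge0 d_le) _.
  by rewrite ler_wpM2l // fnorm_trmx_isometryl_le.
have FVL : fnorm (F^T *m V *m Lam) <= h * fnorm F.
  apply: le_trans (fnorm_diag_mxr_le _ h_ge0 d_le) _.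
  by rewrite ler_wpM2l // -(fnorm_trmx F) fnorm_isometryr_le.
have FHF : fnorm (F^T *m H *m F) <= fnorm F * (h * fnorm F).
  rewrite -mulmxA; apply: le_trans (fnormM _ _) _.
  by rewrite fnorm_trmx ler_wpM2l ?fnorm_ge0.
apply: le_trans (fnormD _ _) _; apply: le_trans (lerD (fnormD _ _) (lexx _)) _.
lra.
Qed.

Lemma Aop_addE (F : 'M[R]_(m, n)) : let W := V + F in
  Aop H W W = V *m ((Lam *m F^T - F^T *m H) *m W)
              + (H *m F *m (W^T *m W) - F *m (W^T *m H *m W)).
Proof.
move=> W; have LamFH : Lam *m F^T - F^T *m H = Lam *m W^T - W^T *m H.
  by rewrite [W^T]linearD /= mulmxDr mulmxDl trmxV_mulH opprD addrACA subrr add0r.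
rewrite /Aop trmx_mul symH LamFH mulmxBl mulmxBr {1 3}/W mulmxDr HV !mulmxDl !mulmxA.
by rewrite opprD addrACA.
Qed.

Lemma Aop_dev_le (F : 'M[R]_(m, n)) :
  fnorm (Aop H (V + F) (V + F)) <=
    h * (4 * fnorm F + 6 * fnorm F ^+ 2 + 2 * fnorm F ^+ 3).
Proof.
set f := fnorm F; have f_ge0 : 0 <= f := fnorm_ge0 F.
rewrite Aop_addE; set W := V + F; set K := Lam *m F^T - F^T *m H.
have HF : fnorm (H *m F) <= h * f := normH_le F.
have FL : fnorm (F *m Lam) <= h * f := fnorm_diag_mxr_le _ h_ge0 d_le.
have KW : fnorm (K *m W) <= 2 * h * f * (1 + f).
  have K_le : fnorm K <= 2 * h * f.
    apply: le_trans (fnormB _ _) _.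
    have -> : F^T *m H = (H *m F)^T by rewrite trmx_mul symH.
    rewrite fnorm_trmx -mulrA mulr2n mulrDl mul1r lerD //.
    by rewrite /f -(fnorm_trmx F) fnorm_diag_mxl_le.
  rewrite mulrDr mulr1 /W mulmxDr; apply: le_trans (fnormD _ _) _.
  apply: lerD; first exact: le_trans (fnorm_isometryr_le _ _) K_le.
  by apply: le_trans (fnormM _ _) _; rewrite ler_wpM2r.
have split : H *m F *m (W^T *m W) - F *m (W^T *m H *m W)
    = H *m F - F *m Lam + H *m F *m (W^T *m W - 1%:M) - F *m (W^T *m H *m W - Lam).
  by rewrite !mulmxBr mulmx1 opprB [_ - F *m Lam + _]addrAC subrKC subrKA.
have HFS : fnorm (H *m F *m (W^T *m W - 1%:M)) <= h * f * (2 * f + f ^+ 2).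
  by apply: le_trans (fnormM _ _) _; rewrite ler_pM ?fnorm_ge0 ?gram_dev_le.
have FT : fnorm (F *m (W^T *m H *m W - Lam)) <= f * (2 * h * f + h * f ^+ 2).
  by apply: le_trans (fnormM _ _) _; rewrite ler_wpM2l ?rayleigh_dev_le.
rewrite split; apply: le_trans (fnormD _ _) _; rewrite fnorm_isometryl //.
apply: le_trans (lerD (lexx _) (fnormB _ _)) _.
apply: le_trans (lerD (lexx _) (lerD (fnormD _ _) (lexx _))) _.
apply: le_trans (lerD (lexx _) (lerD (lerD (fnormB _ _) (lexx _)) (lexx _))) _.
nra.
Qed.

Lemma gramB_midpoint (G U : 'M[R]_(m, n)) : let W := 2^-1 *: (G + U) in
  G^T *m G - U^T *m U = (G - U)^T *m W + W^T *m (G - U).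
Proof.
move=> W; apply/matrixP => i j; rewrite !mxE -sumrB -big_split.
by apply: eq_bigr => k _; rewrite !mxE /=; field.
Qed.

Lemma Aop_gram_skew (W : 'M[R]_(m, n)) :
  (W^T *m Aop H W W)^T = - (W^T *m Aop H W W).
Proof.
have -> : W^T *m Aop H W W = W^T *m H *m W *m (W^T *m W) - W^T *m W *m (W^T *m H *m W).
  by rewrite /Aop mulmxBr trmx_mul symH !mulmxA.
by rewrite linearB /= !trmx_mul !trmxK symH !mulmxA opprB.
Qed.

Lemma Aop_tangent (W : 'M[R]_(m, n)) (s : R) :
  (s *: Aop H W W)^T *m W + W^T *m (s *: Aop H W W) = 0.
Proof.
rewrite trmxZ -scalemxAl -scalemxAr -scalerDr -[_^T *m W]trmxK trmx_mul trmxK.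
by rewrite Aop_gram_skew addNr scaler0.
Qed.

Lemma midpoint_gram (G U : 'M[R]_(m, n)) (s : R) : let W := 2^-1 *: (G + U) in
  G - U = - (s *: Aop H W W) -> G^T *m G = U^T *m U.
Proof.
move=> W GU; apply/eqP; rewrite -subr_eq0 gramB_midpoint -/W GU.
by rewrite [(- _)^T]linearN mulNmx mulmxN -opprD Aop_tangent oppr0.
Qed.

Lemma retraction_step_le (U G : 'M[R]_(m, n)) (s : R) :
  let W := 2^-1 *: (G + U) in
  0 <= s -> G - U = - (s *: Aop H W W) ->
  fnorm (G - s *: (H *m G *m (1%:M - G^T *m G)) - V) <=
    fnorm (U - V) + s * h * (fnorm (W - V) * (4 + 6 * fnorm (W - V) + 2 * fnorm (W - V) ^+ 2)
      + (2 * fnorm (U - V) + fnorm (U - V) ^+ 2) * (1 + fnorm (G - V))).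
Proof.
move=> W s_ge0 GU; rewrite (midpoint_gram GU).
set f := fnorm (W - V); set e := fnorm (U - V); set g := fnorm (G - V).
have e_ge0 : 0 <= e := fnorm_ge0 _.
have g_ge0 : 0 <= g := fnorm_ge0 _.
have GU_le : fnorm (G - U) <= s * (h * (4 * f + 6 * f ^+ 2 + 2 * f ^+ 3)).
  rewrite GU fnormN fnormZ ger0_norm // ler_wpM2l //.
  by have := Aop_dev_le (W - V); rewrite subrKC.
have gram_le : fnorm (1%:M - U^T *m U) <= 2 * e + e ^+ 2.
  by rewrite -opprB fnormN -{1 2}(subrKC V U) gram_dev_le.
have HG_le : fnorm (H *m G *m (1%:M - U^T *m U)) <= h * (2 * e + e ^+ 2) * (1 + g).
  rewrite -(subrKC V G) (mulmxDr H) HV mulmxDl -mulmxA; apply: le_trans (fnormD _ _) _.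
  rewrite fnorm_isometryl //.
  have LX : fnorm (Lam *m (1%:M - U^T *m U)) <= h * (2 * e + e ^+ 2).
    by apply: le_trans (fnorm_diag_mxl_le _ h_ge0 d_le) _; rewrite ler_wpM2l.
  have HX : fnorm (H *m (G - V) *m (1%:M - U^T *m U)) <= h * g * (2 * e + e ^+ 2).
    by apply: le_trans (fnormM _ _) _; rewrite ler_pM ?fnorm_ge0.
  lra.
have -> : G - s *: (H *m G *m (1%:M - U^T *m U)) - V =
          (U - V) + (G - U) - s *: (H *m G *m (1%:M - U^T *m U)).
  by rewrite [(U - V) + _]addrC addrA subrK addrAC.
apply: le_trans (fnormB _ _) _; apply: le_trans (lerD (fnormD _ _) (lexx _)) _.
rewrite fnormZ ger0_norm //.
have := ler_wpM2l s_ge0 HG_le; rewrite -/e; lra.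
Qed.

Lemma retraction_step_le_radius (U G : 'M[R]_(m, n)) (s r a : R) :
  let W := 2^-1 *: (G + U) in
  0 <= s -> G - U = - (s *: Aop H W W) ->
  fnorm (U - V) <= r -> fnorm (G - V) <= r -> 1 + r <= a ->
  fnorm (G - s *: (H *m G *m (1%:M - G^T *m G)) - V) <=
    fnorm (U - V) + s * (6 * a ^+ 2 * h * r).
Proof.
move=> W s_ge0 GU Ur Gr ra; apply: le_trans (retraction_step_le s_ge0 GU) _.
have Wr : fnorm (W - V) <= r.
  have -> : W - V = 2^-1 *: ((G - V) + (U - V)).
    by apply/matrixP => i j; rewrite !mxE /=; field.
  by rewrite fnormZ ger0_norm //; have := fnormD (G - V) (U - V); lra.
rewrite lerD2l -mulrA; apply: ler_wpM2l => //.
rewrite [_ * h * r]mulrAC mulrC; apply: ler_wpM2r => //.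
by apply: step_poly_le; rewrite ?fnorm_ge0.
Qed.

End Perturbation.

Section SingularValues.
Variable R : realType.
Local Open Scope classical_set_scope.

Lemma eigenvalue_gram_le m n (U : 'M[R]_(m, n)) a :
  eigenvalue (U^T *m U) a -> a <= fnorm U ^+ 2.
Proof.
move=> /eigenvalueP[v vUU v_neq0].
have av : a * fnorm v^T ^+ 2 = fnorm (U *m v^T) ^+ 2.
  by rewrite !fnorm_sqr !trmx_mul !trmxK mulmxA -(mulmxA v) vUU -scalemxAl mxtraceZ.
have v_gt0 : 0 < fnorm v^T ^+ 2.
  by rewrite exprn_gt0 // lt_def fnorm_eq0 fnorm_ge0 -trmx0 (inj_eq trmx_inj) v_neq0.
rewrite -(ler_pM2r v_gt0) av -exprMn ler_sqr ?nnegrE ?mulr_ge0 ?fnorm_ge0 //.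
exact: fnormM.
Qed.

Lemma eigenvalue_le_lambda_max m n (U : 'M[R]_(m, n)) a :
  eigenvalue (U^T *m U) a -> a <= lambda_max (U^T *m U).
Proof.
move=> Ua; apply: sup_upper_bound => //; split; first by exists a.
by exists (fnorm U ^+ 2) => b; exact: eigenvalue_gram_le.
Qed.

Lemma sigma_max_le_fnorm m n (U : 'M[R]_(m, n)) : sigma_max U <= fnorm U.
Proof.
rewrite /sigma_max -[X in _ <= X]ger0_norm ?fnorm_ge0 // -sqrtr_sqr ler_wsqrtr //.
have [[a Ua] | no_eigen] := pselect ([set a | eigenvalue (U^T *m U) a] !=set0).
  by apply: ge_sup; [exists a | move=> b; exact: eigenvalue_gram_le].
by rewrite /lambda_max sup_out ?sqr_ge0 // => -[/no_eigen].
Qed.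

Lemma eigenvalue_le_sigma_max m n (U : 'M[R]_(m, n)) a :
  eigenvalue (U^T *m U) a -> Num.sqrt a <= sigma_max U.
Proof. by move=> Ua; rewrite ler_wsqrtr // eigenvalue_le_lambda_max. Qed.

Lemma has_sup_sigma_max_ball m n (V : 'M[R]_(m, n)) (r : R) : 0 <= r ->
  has_sup [set sigma_max U | U in [set U | fnorm (U - V) <= r]].
Proof.
move=> r_ge0; split; first by exists (sigma_max V), V; rewrite //= subrr fnorm0.
exists (r + fnorm V) => _ [U /= UV <-]; apply: le_trans (sigma_max_le_fnorm U) _.
by rewrite -[U](subrK V); apply: le_trans (fnormD _ _) _; rewrite lerD2r.
Qed.

Lemma fnorm_delta_mx n (i : 'I_n) : fnorm (delta_mx i i : 'M[R]_n) = 1.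
Proof.
rewrite /fnorm trmx_delta mul_delta_mx /mxtrace (bigD1 i) //= big1 => [|j /negbTE ji].
  by rewrite mxE !eqxx addr0 sqrtr1.
by rewrite mxE ji.
Qed.

(* The witness V (1 + r e_i e_i^T) stretches one column of V by 1 + r. *)
Lemma sup_sigma_max_ball_ge m n (V : 'M[R]_(m, n)) (r : R) :
  (0 < n)%N -> V^T *m V = 1%:M -> 0 <= r ->
  1 + r <= sup [set sigma_max U | U in [set U | fnorm (U - V) <= r]].
Proof.
move=> n_gt0 orthoV r_ge0; set i := Ordinal n_gt0; set e : 'rV[R]_n := delta_mx 0 i.
set M := 1%:M + r *: delta_mx i i.
have MT : M^T = M by rewrite [M^T]linearD /= trmxZ trmx1 trmx_delta.
have eM : e *m M = (1 + r) *: e.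
  by rewrite mulmxDr mulmx1 -scalemxAr mul_delta_mx scalerDl scale1r.
have eigen : eigenvalue ((V *m M)^T *m (V *m M)) ((1 + r) ^+ 2).
  apply/eigenvalueP; exists e.
    rewrite trmx_mul MT !mulmxA -(mulmxA _ V^T V) orthoV mulmx1 eM -scalemxAl eM.
    by rewrite scalerA -expr2.
  by apply/eqP => /matrixP/(_ 0 i); rewrite !mxE !eqxx => /eqP; rewrite oner_eq0.
apply: le_trans (_ : sigma_max (V *m M) <= _).
  by rewrite -[1 + r]ger0_norm ?addr_ge0 // -sqrtr_sqr eigenvalue_le_sigma_max.
apply: sup_upper_bound; first exact: has_sup_sigma_max_ball.
exists (V *m M) => //=.
rewrite mulmxDr mulmx1 addrC addKr fnorm_isometryl // fnormZ fnorm_delta_mx.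
by rewrite ger0_norm ?mulr1.
Qed.

End SingularValues.

Section OrbitDistance.
Variable R : realType.
Local Open Scope classical_set_scope.

Lemma has_inf_dist_orb m n (U V : 'M[R]_(m, n)) :
  has_inf [set fnorm (U *m Q - V) | Q in [set Q | orthogonal_mx Q]].
Proof.
split; last by exists 0 => _ [Q _ <-]; exact: fnorm_ge0.
by exists (fnorm (U *m 1%:M - V)), 1%:M; rewrite //= /orthogonal_mx trmx1 mulmx1.
Qed.

Lemma dist_orb_le m n (U V : 'M[R]_(m, n)) (Q : 'M[R]_n) :
  orthogonal_mx Q -> dist_orb U V <= fnorm (U *m Q - V).
Proof.
by move=> orthoQ; apply: ge_inf; [case: (has_inf_dist_orb U V) | exists Q].
Qed.

Lemma dist_orb_le_shift m n (U V W : 'M[R]_(m, n)) (c e : R) : 0 < e ->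
  (forall Q, orthogonal_mx Q -> fnorm (U *m Q - V) < dist_orb U V + e ->
     dist_orb W V <= fnorm (U *m Q - V) + c) ->
  dist_orb W V <= dist_orb U V + c.
Proof.
move=> e_gt0 WU; apply/ler_addgt0Pr => eps eps_gt0.
have em_gt0 : 0 < Num.min e eps by rewrite lt_min e_gt0.
have [_ [Q orthoQ <-] UQ] := inf_adherent em_gt0 (has_inf_dist_orb U V).
have UQe : fnorm (U *m Q - V) < dist_orb U V + e.
  by apply: lt_le_trans UQ _; rewrite lerD2l ge_min lexx.
apply: le_trans (WU Q orthoQ UQe) _.
have : Num.min e eps <= eps by rewrite ge_min lexx orbT.
move: UQ; rewrite -/(dist_orb U V); lra.
Qed.

End OrbitDistance.

Unset Implicit Arguments.

Theorem lemma4p5 (R : realType) (ng n : nat)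
  (H : 'M[R]_ng) (lam : nat -> R) (Vs : 'M[R]_(ng, n))
  (eta_a eta_b delta_s : R)
  (ghat g : 'M[R]_(ng, n) -> R -> 'M[R]_(ng, n))
  (eta1 eta2 delta_b : R) :
  (* setting *)
  (0 < n)%N -> (n < ng)%N ->
  H^T = H ->
  (forall i j : nat, (i <= j)%N -> (j < ng)%N -> lam i <= lam j) ->
  (exists P : 'M[R]_ng, P^T *m P = 1%:M /\
     H *m P = P *m diag_mx (\row_(i < ng) lam i)) ->
  lam 0%N < 0 ->
  lam n.-1 < lam n ->
  Vs^T *m Vs = 1%:M ->
  H *m Vs = Vs *m diag_mx (\row_(i < n) lam i) ->
  (* constants and the maps ghat, g *)
  0 < eta_a -> 0 < eta_b -> 0 < delta_s ->
  (forall U s, fnorm (U - Vs) <= eta_a -> 0 <= s <= delta_s ->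
     fnorm (ghat U s - Vs) <= eta_b /\
     ghat U s - U = - (s *: Aop H ((2%:R)^-1 *: (ghat U s + U))
                                 ((2%:R)^-1 *: (ghat U s + U)))) ->
  (forall U s W, fnorm (U - Vs) <= eta_a -> 0 <= s <= delta_s ->
     fnorm (W - Vs) <= eta_b ->
     W - U = - (s *: Aop H ((2%:R)^-1 *: (W + U)) ((2%:R)^-1 *: (W + U))) ->
     W = ghat U s) ->
  (forall U s, fnorm (U - Vs) <= eta_a -> 0 <= s <= delta_s ->
     g U s = ghat U s - s *: ((H *m ghat U s) *m (1%:M - (ghat U s)^T *m ghat U s))) ->
  (forall U s (Q : 'M[R]_n), dist_orb U Vs <= eta_a -> 0 <= s <= delta_s ->
     orthogonal_mx Q -> g (U *m Q) s = g U s *m Q) ->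
  (forall U s, dist_orb U Vs <= eta_a -> 0 <= s <= delta_s ->
     dist_orb (g U s) Vs <= eta_b) ->
  (* the lemma *)
  let r := Num.max eta_a eta_b in
  let alpha := sup [set sigma_max U | U in [set U : 'M[R]_(ng, n) | fnorm (U - Vs) <= r]] in
  let L := 6%:R * alpha ^+ 2 * Num.max `|lam 0%N| `|lam ng.-1| in
  0 < eta1 -> eta1 < Num.min 1 (Num.min eta_a eta_b) ->
  0 < eta2 -> eta2 < eta1 ->
  0 < delta_b ->
  delta_b <= Num.min ((eta1 - eta2) /
                       (L * Num.max eta_a eta_b + `|lam 0%N| * alpha * (alpha + 1) * eta2))
                     delta_s ->
  forall U s, dist_orb U Vs <= eta2 -> 0 <= s <= delta_b ->
    dist_orb (g U s) Vs <= eta1.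
Proof.
move=> n_gt0 n_lt_ng symH lam_mono [P [orthoP HP]] lam0_lt0 _ orthoV HV eta_a_gt0 _ _.
move=> ghatP _ gE gQ _ r alpha L _ eta1_lt eta2_gt0 eta21 _ delta_b_le U s distU.
move=> /andP[s_ge0 s_le]; pose h := Num.max `|lam 0%N| `|lam ng.-1|.
move: eta1_lt delta_b_le; rewrite !lt_min le_min => /and3P[_ eta1_a _].
move=> /andP[delta_b_div delta_b_s].
have h_gt0 : 0 < h by rewrite lt_max normr_gt0 lt_eqF.
have normH p (X : 'M[R]_(ng, p)) : fnorm (H *m X) <= h * fnorm X.
  exact: fnorm_sorted_spectral_le lam_mono orthoP HP.
have d_le (i : 'I_n) : `|(\row_(i < n) lam i) 0 i| <= h.
  by rewrite mxE norm_le_max_ends // (ltn_trans (ltn_ord i) n_lt_ng).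
have r_gt0 : 0 < r by rewrite lt_max eta_a_gt0.
have alpha_ge : 1 + r <= alpha := sup_sigma_max_ball_ge n_gt0 orthoV (ltW r_gt0).
have alpha_gt0 : 0 < alpha by lra.
have sLr : s * (L * r) <= eta1 - eta2.
  apply: mulr_le_of_le_divr s_ge0 _ _ (le_trans s_le delta_b_div).
    by rewrite !mulr_gt0 ?exprn_gt0.
  by rewrite lerDl !mulr_ge0 ?normr_ge0 ?ltW ?addr_gt0.
apply: le_trans (_ : _ <= dist_orb U Vs + (eta1 - eta2)) _; last lra.
apply: (dist_orb_le_shift (e := eta_a - eta2)) => [|Q orthoQ UQ_lt]; first lra.
have UQ_le : fnorm (U *m Q - Vs) <= eta_a by lra.
have s_ds : 0 <= s <= delta_s by rewrite s_ge0 (le_trans s_le).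
have [ghat_le ghat_eq] := ghatP _ _ UQ_le s_ds.
apply: le_trans (dist_orb_le _ _ orthoQ) _; rewrite -gQ ?gE //; last lra.
apply: le_trans (retraction_step_le_radius orthoV HV symH (ltW h_gt0) d_le normH
                   s_ge0 ghat_eq _ _ alpha_ge) _.
- by rewrite (le_trans UQ_le) // le_max lexx.
- by rewrite (le_trans ghat_le) // le_max lexx orbT.
- by rewrite lerD2l; exact: sLr.
Qed.
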